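(* Let $\{\widehat X_n(x):x\in\mathbb{R}^2\}_{n\ge0}$ be an i.i.d. sequence of random fields whose variables $\widehat X_n(x)$ are all mutually independent with standard Fréchet distribution. Set $X_n(x)=\tfrac23\widehat X_n(x)\vee\tfrac13\widehat X_{n-1}(x)$, let $\{Z_n\}_{n\ge1}$ be i.i.d. standard Fréchet random variables independent of $\{\widehat X_n\}$, set $Z_n(x)=Z_n$ for all $x$, let $\alpha:\mathbb{R}^2\to(0,\infty)$, and $Y_n(x)=X_n(x)\vee Z_n^{1/\alpha(x)}$. Then for all $n\ge1$ and $x\in\mathbb{R}^2$, $r\ge1$: $$\lambda(Y_{n+r}(x)\mid Y_n(x))=\begin{cases}0,& \alpha(x)<1 \text{ or } r>1,\\ 1/6,& \alpha(x)=1\text{ and } r=1,\\ 1/3,& \alpha(x)>1 \text{ and } r=1;\end{cases}$$ for $x\neq x'$ and $r\ge1$, $\lambda(Y_{n+r}(x')\mid Y_n(x))=0$; and for $x\ne x'$, $$\lambda(Y_n(x')\mid Y_n(x))=\begin{cases}1,& \alpha(x')\le\alpha(x)<1,\\ 1/2,& \alpha(x')\le\alpha(x)=1,\\ 0,&\text{otherwise.}\end{cases}$$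
   Context: A random variable has the standard (unit) Fréchet distribution if $P(\cdot\le z)=e^{-1/z}$ for $z>0$. For random variables $U,V$, the tail dependence coefficient is $\lambda(V\mid U)=\lim_{y\to\infty}P(V>y\mid U>y)$. $a\vee b=\max(a,b)$. *)

From HB Require Import structures.
From mathcomp Require Import all_boot all_order all_algebra.
From mathcomp Require Import all_classical all_reals all_analysis.
Set Implicit Arguments. Unset Strict Implicit. Unset Printing Implicit Defensive.
Import Order.TTheory GRing.Theory Num.Theory.
Import numFieldNormedType.Exports.
Local Open Scope classical_set_scope.
Local Open Scope ring_scope.

Section Defs.
Context {d : measure_display} {T : measurableType d} {R : realType}.
Variable P : probability T R.

Definition mutually_independent (I : eqType) (W : I -> T -> R) : Prop :=
  (forall i, measurable_fun setT (W i)) /\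
  forall (s : seq I) (B : I -> set R), uniq s ->
    (forall i, measurable (B i)) ->
    P (\big[setI/setT]_(i <- s) (W i @^-1` B i)) =
    (\prod_(i <- s) P (W i @^-1` B i))%E.

Definition std_frechet (W : T -> R) : Prop :=
  forall z : R, 0 < z -> P (W @^-1` `]-oo, z]) = (expR (- z^-1))%:E.

Definition condP (A B : set T) : R := fine (P (A `&` B)) / fine (P B).

Definition tail_dep (V U : T -> R) (l : R) : Prop :=
  (fun y : R => condP [set t | y < V t] [set t | y < U t]) @ +oo --> l.
End Defs.

(* X_n(x) = 2/3 Xh_n(x) \/ 1/3 Xh_{n-1}(x)  (used for n >= 1) *)
Definition Xfield {T : Type} {R : realType} (Xh : nat -> R * R -> T -> R)
  (n : nat) (x : R * R) (t : T) : R :=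
  Num.max (2/3 * Xh n x t) (1/3 * Xh n.-1 x t).

Definition Yfield {T : Type} {R : realType} (Xh : nat -> R * R -> T -> R)
  (Z : nat -> T -> R) (alpha : R * R -> R) (n : nat) (x : R * R) (t : T) : R :=
  Num.max (Xfield Xh n x t) (Z n t `^ (alpha x)^-1).

From HB Require Import structures.
From mathcomp Require Import all_boot all_order all_algebra.
From mathcomp Require Import all_classical all_reals all_analysis.
From mathcomp Require Import ring lra zify.
Import Order.TTheory GRing.Theory Num.Theory.
Import numFieldNormedType.Exports.
Local Open Scope classical_set_scope.
Local Open Scope ring_scope.

(* Everything reduces to distribution functions.  For y >= 1 the event
   {Y_n(x) <= y} is the intersection of {Xh_n(x) <= 3y/2}, {Xh_(n-1)(x) <= 3y}
   and {Z_n <= y^alpha(x)} (Yfield_le_below), and a finite intersection of such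
   constraints on distinct independent standard Frechet variables has
   probability exp(- sum of the reciprocal thresholds) (below_frechet_prob).
   Hence P(Y_n(x) <= y) = exp(- rate (alpha x) y) with rate a y = 1/y + y^-a,
   and the joint distribution function of two such variables is
   exp(-(A + B - S)), where S sums the reciprocal thresholds of the variables
   they share.  By inclusion-exclusion, P(V > y | U > y) -> lim S/A whenever
   A, B -> 0 (tail_dep_of_exponents, via the bounds expR_ratio_bounds). *)

(* For y >= 1, the distribution function of Y_n(x) at y is exp(- rate (alpha x) y). *)
Definition rate {R : realType} (a y : R) : R := y^-1 + (y `^ a)^-1.

Section Asymptotics.
Context {R : realType}.
Implicit Types (a b y : R) (f g : R -> R).

Lemma cvg_eventually_eq {f g} {l : R} : g @ +oo --> l ->
  (\forall y \near +oo, f y = g y) -> f @ +oo --> l.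
Proof.
move=> + fg; apply: cvg_trans; apply: near_eq_cvg.
by near=> y; rewrite (near fg y).
Unshelve. all: by end_near. Qed.

(* y^b -> +oo for b > 0: y^b >= A as soon as y >= (max A 1)^(1/b). *)
Lemma powR_cvgy b : 0 < b -> (fun y => y `^ b) @ +oo --> +oo.
Proof.
move=> b0; apply/cvgryPge => A.
have A1 : 1 <= Num.max A 1 by rewrite le_max lexx orbT.
have AM : A <= Num.max A 1 by rewrite le_max lexx.
near=> y.
have My : (Num.max A 1) `^ b^-1 <= y.
  by near: y; apply: nbhs_pinfty_ge; exact: num_real.
rewrite (le_trans AM) // -[leLHS](@powRr1 _ (Num.max A 1)); last first.
  exact: le_trans ler01 A1.
by rewrite -(mulVf (lt0r_neq0 b0)) powRrM ge0_ler_powR ?ltW // nnegrE ?powR_ge0.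
Unshelve. all: by end_near. Qed.

Lemma powRN_cvg0 {b} : 0 < b -> (fun y => y `^ (- b)) @ +oo --> 0.
Proof.
move=> b0; have -> : (fun y => y `^ (- b)) = (fun y => (y `^ b)^-1).
  by apply/funext => y; rewrite powRN.
apply/gtr0_cvgV0; last exact: powR_cvgy.
near=> y; apply: powR_gt0; near: y; exact: nbhs_pinfty_gt.
Unshelve. all: by end_near. Qed.

Lemma rate_gt0 {a y} : 0 < y -> 0 < rate a y.
Proof. by move=> y0; rewrite addr_gt0 ?invr_gt0 ?powR_gt0. Qed.

Lemma rate_cvg0 a : 0 < a -> rate a @ +oo --> 0.
Proof.
move=> a0; rewrite -[X in _ --> X](addr0 0).
have inv0 : (fun y : R => y^-1) @ +oo --> 0.
  apply: (cvg_eventually_eq (powRN_cvg0 ltr01)); near=> y.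
  by rewrite powR_inv1 // ltW //; near: y; exact: nbhs_pinfty_gt.
have invpow0 : (fun y : R => (y `^ a)^-1) @ +oo --> 0.
  by apply: (cvg_eventually_eq (powRN_cvg0 a0)); near=> y; rewrite powRN.
exact: cvgD.
Unshelve. all: by end_near. Qed.

Lemma ratio_shift_cvg {f} : f @ +oo --> 0 ->
  (fun y => f y / (f y + 1)) @ +oo --> 0 /\ (fun y => (1 + f y)^-1) @ +oo --> (1:R).
Proof.
move=> f0.
have inv1 : (fun y => (1 + f y)^-1) @ +oo --> (1:R).
  rewrite -[X in _ --> X]invr1 -[X in (X^-1)%R](addr0 1).
  by apply: cvgV; [rewrite addr0 oner_neq0 | apply: cvgD => //; exact: cvg_cst].
split => //; rewrite -(mul0r 1); apply: (cvg_eventually_eq (cvgM f0 inv1)).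
by near=> y; rewrite addrC.
Unshelve. all: by end_near. Qed.

Lemma invy_rate_cvg {a} : 0 < a ->
  (fun y => y^-1 / rate a y) @ +oo -->
    ((if a < 1 then 0 else if a == 1 then 1/2 else 1) : R).
Proof.
move=> a0; rewrite /rate; case: ltgtP => [a1|a1|->].
- have b0 : 0 < 1 - a by rewrite subr_gt0.
  have [lim _] := ratio_shift_cvg (powRN_cvg0 b0); apply: (cvg_eventually_eq lim).
  near=> y; have y0 : 0 < y by near: y; exact: nbhs_pinfty_gt.
  have ya : 0 < y `^ a by apply: powR_gt0.
  rewrite powRN powRB ?gt_eqF ?implybT // powRr1 ?ltW //.
  by field; rewrite ?gt_eqF ?addr_gt0 ?invr_gt0.
- have b0 : 0 < a - 1 by rewrite subr_gt0.
  have [_ lim] := ratio_shift_cvg (powRN_cvg0 b0); apply: (cvg_eventually_eq lim).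
  near=> y; have y0 : 0 < y by near: y; exact: nbhs_pinfty_gt.
  have ya : 0 < y `^ a by apply: powR_gt0.
  rewrite opprB powRB; last by rewrite (gt_eqF y0) implybT.
  rewrite powRr1 ?ltW //.
  by field; rewrite ?gt_eqF ?addr_gt0 ?invr_gt0.
- apply: (cvg_eventually_eq (cvg_cst (1/2 : R))).
  near=> y; have y0 : 0 < y by near: y; exact: nbhs_pinfty_gt.
  by rewrite powRr1 ?ltW //; field; rewrite ?gt_eqF ?addr_gt0 ?invr_gt0.
Unshelve. all: by end_near. Qed.

Lemma invpow_rate_cvg a : 0 < a ->
  (fun y => (y `^ a)^-1 / rate a y) @ +oo -->
    ((if a < 1 then 1 else if a == 1 then 1/2 else 0) : R).
Proof.
move=> a0; have -> : ((if a < 1 then 1 else if a == 1 then 1/2 else 0) : R) =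
    1 - (if a < 1 then 0 else if a == 1 then 1/2 else 1).
  by case: ifP => _; [rewrite subr0 | case: ifP => _; [field | rewrite subrr]].
have lim : (fun y => 1 - y^-1 / rate a y) @ +oo -->
    (1 - (if a < 1 then 0 else if a == 1 then 1/2 else 1) : R).
  exact: cvgB (cvg_cst _) (invy_rate_cvg a0).
apply: (cvg_eventually_eq lim).
near=> y; have y0 : 0 < y by near: y; exact: nbhs_pinfty_gt.
have r0 : 0 < rate a y := rate_gt0 y0.
have -> : (y `^ a)^-1 = rate a y - y^-1 by rewrite /rate addrC addKr.
by field; rewrite !gt_eqF.
Unshelve. all: by end_near. Qed.

Lemma steeper_rate_cvg0 a a' : 0 < a -> a < a' ->
  (fun y => (y `^ a')^-1 / rate a y) @ +oo --> 0.
Proof.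
move=> a0 aa'; have b0 : 0 < a' - a by rewrite subr_gt0.
apply: (squeeze_cvgr _ (cvg_cst 0) (powRN_cvg0 b0)).
near=> y; have y0 : 0 < y by near: y; exact: nbhs_pinfty_gt.
have ya : 0 < y `^ a by apply: powR_gt0.
have ya' : 0 < y `^ a' by apply: powR_gt0.
have r0 : 0 < rate a y := rate_gt0 y0.
apply/andP; split; first by rewrite divr_ge0 // ltW // invr_gt0.
rewrite opprB powRB; last by rewrite (gt_eqF y0) implybT.
rewrite ler_pdivrMr // /rate mulrDr.
have -> : y `^ a / y `^ a' * (y `^ a)^-1 = (y `^ a')^-1.
  by field; rewrite !gt_eqF.
by rewrite lerDr mulr_ge0 // ?divr_ge0 ?invr_ge0 ?ltW.
Unshelve. all: by end_near. Qed.

End Asymptotics.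

Section ConditionalExceedance.
Context {R : realType}.

(* Elementary bounds: for a > 0 and s >= 0, the ratio (e^s - 1)/(1 - e^-a)
   lies between s/a and (s/a) e^(s + a); both bounds follow from 1 + x <= e^x. *)
Lemma expR_ratio_bounds (a s : R) : 0 < a -> 0 <= s ->
  s / a <= (expR s - 1) / (1 - expR (- a)) <= s / a * expR (s + a).
Proof.
move=> a0 s0.
have den0 : 0 < 1 - expR (- a) by rewrite subr_gt0 expR_lt1 oppr_lt0.
have num_ge : s <= expR s - 1 by have := expR_ge1Dx s; lra.
have den_le : 1 - expR (- a) <= a by have := expR_ge1Dx (- a); lra.
have num_le : expR s - 1 <= s * expR s.
  have := expR_ge1Dx (- s); have := expR_gt0 s.
  have : expR (- s) * expR s = 1 by rewrite -expRD addNr expR0.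
  nra.
have den_ge : a * expR (- a) <= 1 - expR (- a).
  have := expR_ge1Dx a; have := expR_gt0 (- a).
  have : expR (- a) * expR a = 1 by rewrite -expRD addNr expR0.
  nra.
apply/andP; split.
- rewrite ler_pdivlMr // (le_trans _ num_ge) //.
  by rewrite -{2}[s](divfK (lt0r_neq0 a0)) ler_wpM2l // divr_ge0 // ltW.
- rewrite ler_pdivrMr // (le_trans num_le) //.
  have -> : s * expR s = s / a * expR (s + a) * (a * expR (- a)).
    by rewrite expRD expRN; field; rewrite !lt0r_neq0 ?expR_gt0.
  by rewrite ler_wpM2l // !mulr_ge0 ?invr_ge0 ?expR_ge0 // ltW.
Qed.

(* The middle ratio is squeezed
   between S/A and (S/A) e^(S+A) by expR_ratio_bounds, and S -> 0 since S = (S/A) A. *)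
Lemma exceedance_cvg {A B S : R -> R} {L : R} :
  (\forall y \near +oo, 0 < A y /\ 0 <= S y) ->
  A @ +oo --> 0 -> B @ +oo --> 0 -> (fun y => S y / A y) @ +oo --> L ->
  (fun y => (1 - expR (- B y)) +
     expR (- A y - B y) * ((expR (S y) - 1) / (1 - expR (- A y)))) @ +oo --> L.
Proof.
move=> pos A0 B0 SA.
have expR_cvg1 (f : R -> R) : f @ +oo --> 0 -> (fun y => expR (f y)) @ +oo --> (1:R).
  by move=> f0; rewrite -expR0; apply: (continuous_cvg _ (@continuous_expR R 0) f0).
have S0 : S @ +oo --> 0.
  have SAA : (fun y => S y / A y * A y) @ +oo --> L * 0 by apply: cvgM.
  rewrite mulr0 in SAA; apply: (cvg_eventually_eq SAA).
  by near=> y; rewrite divfK //; apply: lt0r_neq0; have [] := near pos y.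
have ratio : (fun y => (expR (S y) - 1) / (1 - expR (- A y))) @ +oo --> L.
  have upper : (fun y => S y / A y * expR (S y + A y)) @ +oo --> L.
    rewrite -[X in _ --> X]mulr1; apply: cvgM SA _; apply: expR_cvg1.
    by rewrite -(addr0 0); apply: cvgD.
  apply: (squeeze_cvgr _ SA upper); near=> y.
  have [a0 s0] : 0 < A y /\ 0 <= S y by near: y.
  exact: expR_ratio_bounds.
have B1 : (fun y => 1 - expR (- B y)) @ +oo --> 0.
  rewrite -(subrr 1); apply: cvgB; first exact: cvg_cst.
  by apply: expR_cvg1; rewrite -oppr0; apply: cvgN.
have AB1 : (fun y => expR (- A y - B y)) @ +oo --> (1:R).
  apply: expR_cvg1; rewrite -(subr0 0) -{1}oppr0.
  by apply: cvgB => //; apply: cvgN.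
rewrite -[X in _ --> X](add0r L) -[X in _ --> _ + X](mul1r L).
exact: cvgD B1 (cvgM AB1 ratio).
Unshelve. all: by end_near. Qed.

End ConditionalExceedance.

Section TailDependence.
Context {d : measure_display} {T : measurableType d} {R : realType}.
Variable P : probability T R.

Lemma exceed_setC (U : T -> R) (y : R) :
  [set t | y < U t] = ~` [set t | U t <= y].
Proof. by apply/seteqP; split => t /=; rewrite ltNge => /negP. Qed.

(* With P(EU) = e^-A, P(EV) = e^-B, P(EU & EV) = e^-(A+B-S), inclusion-exclusion gives
   P(~EV | ~EU) = (1 - P(EU) - P(EV) + P(EU & EV)) / (1 - P(EU)) in closed form. *)
Lemma condP_complement {EU EV : set T} {A B S : R} :
  measurable EU -> measurable EV -> 0 < A ->
  P EU = (expR (- A))%:E -> P EV = (expR (- B))%:E ->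
  P (EU `&` EV) = (expR (- (A + B - S)))%:E ->
  condP P (~` EV) (~` EU) =
  (1 - expR (- B)) + expR (- A - B) * ((expR S - 1) / (1 - expR (- A))).
Proof.
move=> mU mV A0 pU pV pUV.
rewrite /condP -setCU !probability_setC //; last exact: measurableU.
rewrite measureUfinl //; last by rewrite -ge0_fin_numE // fin_num_measure.
rewrite pU setIC.
transitivity (fine (1 - ((expR (- B))%:E + (expR (- A))%:E - (expR (- (A + B - S)))%:E)) /
              fine (1 - (expR (- A))%:E)).
  by congr (fine (1 - (_ + _ - _)) / _); [exact: pV | exact: pU | exact: pUV].
rewrite /=.
have den0 : 1 - expR (- A) != 0.
  by rewrite subr_eq0 eq_sym lt_eqF // expR_lt1 oppr_lt0.
have -> : expR (- (A + B - S)) = expR (- A - B) * expR S.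
  by rewrite -expRD; congr expR; ring.
by rewrite expRD; field.
Qed.

Lemma tail_dep_of_exponents {U V : T -> R} {A B S : R -> R} {L : R} :
  (\forall y \near +oo,
     [/\ measurable [set t | U t <= y], measurable [set t | V t <= y],
          P [set t | U t <= y] = (expR (- A y))%:E,
          P [set t | V t <= y] = (expR (- B y))%:E &
     [/\ P ([set t | U t <= y] `&` [set t | V t <= y]) = (expR (- (A y + B y - S y)))%:E,
          0 < A y & 0 <= S y]]) ->
  A @ +oo --> 0 -> B @ +oo --> 0 -> (fun y => S y / A y) @ +oo --> L ->
  tail_dep P V U L.
Proof.
move=> H A0 B0 SA.
have pos : \forall y \near +oo, 0 < A y /\ 0 <= S y.
  by near=> y; have /(_ _)[//|_ _ _ _ [_ ? ?]] := near H y.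
rewrite /tail_dep; apply: (cvg_eventually_eq (exceedance_cvg pos A0 B0 SA)).
near=> y; have /(_ _)[//|mU mV pU pV [pUV A0y _]] := near H y.
by rewrite !exceed_setC (condP_complement mU mV A0y pU pV pUV).
Unshelve. all: by end_near. Qed.

End TailDependence.

Lemma nth_snd_index (I V : eqType) (x0 : V) (s : seq (I * V)) (p : I * V) :
  uniq (map fst s) -> p \in s -> nth x0 (map snd s) (index p.1 (map fst s)) = p.2.
Proof.
elim: s => [//|q s IH] /= /andP[qs us]; rewrite in_cons => /orP[/eqP->|ps].
  by rewrite eqxx.
case: eqP => [e|_]; last by rewrite /= IH.
by move: qs; rewrite e (map_f fst ps).
Qed.

Definition below {T : Type} {R : realType} {I : Type} (W : I -> T -> R)
  (s : seq (I * R)) : set T :=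
  \big[setI/setT]_(p <- s) (W p.1 @^-1` `]-oo, p.2]).

Lemma below_cat {T : Type} {R : realType} {I : Type} (W : I -> T -> R)
  (s1 s2 : seq (I * R)) : below W (s1 ++ s2) = below W s1 `&` below W s2.
Proof. by rewrite /below big_cat. Qed.

Section FrechetProducts.
Context {d : measure_display} {T : measurableType d} {R : realType}.
Variable P : probability T R.

Lemma below_measurable {I : Type} (W : I -> T -> R) (s : seq (I * R)) :
  (forall i, measurable_fun setT (W i)) -> measurable (below W s).
Proof.
move=> mW; apply: (big_ind (fun A => measurable A)) => //.
  by move=> A B mA mB; apply: measurableI.
by move=> p _; rewrite -(setTI (_ @^-1` _)); apply: mW => //; exact: measurable_itv.
Qed.

Lemma below_frechet_prob (I : eqType) (W : I -> T -> R) (s : seq (I * R)) :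
  mutually_independent P W -> (forall i, std_frechet P (W i)) ->
  uniq (map fst s) -> all (fun p => 0 < p.2) s ->
  P (below W s) = (expR (- \sum_(p <- s) p.2^-1))%:E.
Proof.
move=> [_ indep] frechet us pos.
pose c i := nth 0 (map snd s) (index i (map fst s)).
have cE p : p \in s -> c p.1 = p.2 by move=> ps; exact: nth_snd_index.
have -> : below W s = \big[setI/setT]_(i <- map fst s) (W i @^-1` `]-oo, c i]).
  by rewrite big_map; apply: eq_big_seq => p ps; rewrite cE.
rewrite (indep _ (fun i => [set` `]-oo, c i]]) us); last by move=> i; exact: measurable_itv.
rewrite -sumrN expR_sum -prodEFin big_map; apply: eq_big_seq => p ps.
by rewrite cE // frechet //; exact: (allP pos).
Qed.

End FrechetProducts.

(* Index set of the independent Frechet family of the theorem: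
   inl (n, x) stands for Xh_n(x) and inr m for Z_(m+1); field_family is the
   family whose mutual independence the theorem assumes. *)
Definition field_index (R : realType) := ((nat * (R * R)) + nat)%type.

Definition field_family {T : Type} {R : realType} (Xh : nat -> R * R -> T -> R)
  (Z : nat -> T -> R) (i : field_index R) : T -> R :=
  match i with inl nx => Xh nx.1 nx.2 | inr m => Z m.+1 end.

Definition Y_bounds {R : realType} (alpha : R * R -> R) (n : nat) (x : R * R) (y : R) :
  seq (field_index R * R) :=
  [:: (inl (n, x), 3/2 * y); (inl (n.-1, x), 3 * y); (inr n.-1, y `^ alpha x)].

Definition Y_indices {R : realType} (n : nat) (x : R * R) : seq (field_index R) :=
  [:: inl (n, x); inl (n.-1, x); inr n.-1].

Lemma Y_bounds_indices {R : realType} (alpha : R * R -> R) n x (y : R) :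
  map fst (Y_bounds alpha n x y) = Y_indices n x.
Proof. by []. Qed.

(* Reduce the distinctness of finitely many field indices to (in)equalities of
   times and sites. *)
Ltac simpl_index_uniq :=
  try rewrite /Y_indices;
  rewrite /= !inE -!sum_eqE /= !xpair_eqE !eqxx ?andbT ?andbF ?orbF /=.

(* For y >= 1 and a > 0, z^(1/a) <= y iff z <= y^a; for z < 0 both sides hold
   since z^(1/a) = 1 by convention. *)
Lemma powR_inv_le {R : realType} (z y a : R) : 1 <= y -> 0 < a ->
  (z `^ a^-1 <= y) = (z <= y `^ a).
Proof.
move=> y1 a0; have y0 : 0 < y by apply: lt_le_trans y1.
case: (ltgtP z 0) => [z0|z0|->].
- rewrite {1}/powR (lt_eqF z0) (ln0 (ltW z0)) mulr0 expR0 y1.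
  by apply/esym; rewrite (le_trans (ltW z0)) // powR_ge0.
- apply/idP/idP => h.
    rewrite -[z](@powRr1 _ z (ltW z0)) -(mulVf (lt0r_neq0 a0)) powRrM.
    apply: ge0_ler_powR => //; first exact: ltW.
      by rewrite nnegrE powR_ge0.
    by rewrite nnegrE (le_trans (powR_ge0 _ _) h).
  rewrite -[y](@powRr1 _ y (ltW y0)) -(mulfV (lt0r_neq0 a0)) powRrM.
  apply: ge0_ler_powR => //; first by rewrite invr_ge0 ltW.
    by rewrite nnegrE ltW.
  by rewrite nnegrE powR_ge0.
- by rewrite powR0 ?invr_neq0 ?lt0r_neq0 // ltW // powR_ge0.
Qed.

Section YEvents.
Context {T : Type} {R : realType}.
Variables (Xh : nat -> R * R -> T -> R) (Z : nat -> T -> R) (alpha : R * R -> R).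

Lemma le_Yfield n x t (y : R) : 1 <= y -> 0 < alpha x ->
  (Yfield Xh Z alpha n x t <= y) =
  [&& Xh n x t <= 3/2 * y, Xh n.-1 x t <= 3 * y & Z n t <= y `^ alpha x].
Proof.
move=> y1 a0; rewrite /Yfield /Xfield !ge_max powR_inv_le // andbA.
by congr (_ && _); congr (_ && _); apply/idP/idP => h; lra.
Qed.

Lemma Yfield_le_below n x (y : R) : (1 <= n)%N -> 1 <= y -> 0 < alpha x ->
  [set t | Yfield Xh Z alpha n x t <= y] =
  below (field_family Xh Z) (Y_bounds alpha n x y).
Proof.
case: n => // n _ y1 a0; rewrite /below !big_cons big_nil.
apply/seteqP; split => t /=; rewrite le_Yfield //= !in_itv /=.
  by move=> /and3P[-> -> ->].
by move=> [-> [-> [-> _]]].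
Qed.

End YEvents.

Lemma Y_bounds_pos {R : realType} (alpha : R * R -> R) n x (y : R) :
  0 < y -> all (fun p => 0 < p.2) (Y_bounds alpha n x y).
Proof. by move=> y0; rewrite /= !mulr_gt0 ?powR_gt0. Qed.

Lemma Y_bounds_rate {R : realType} (alpha : R * R -> R) n x (y : R) :
  0 < y -> \sum_(p <- Y_bounds alpha n x y) p.2^-1 = rate (alpha x) y.
Proof.
move=> y0; have ya : 0 < y `^ alpha x by apply: powR_gt0.
by rewrite !big_cons big_nil /rate /=; field; rewrite !lt0r_neq0.
Qed.

Section TailDependenceOfY.
Context {d : measure_display} {T : measurableType d} {R : realType}.
Variables (P : probability T R) (Xh : nat -> R * R -> T -> R) (Z : nat -> T -> R)
  (alpha : R * R -> R).
Local Notation W := (field_family Xh Z).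
Local Notation Y := (Yfield Xh Z alpha).
Hypothesis W_indep : mutually_independent P W.
Hypothesis W_frechet : forall i, std_frechet P (W i).
Hypothesis alpha_gt0 : forall x, 0 < alpha x.

Lemma Yfield_cdf n x (y : R) : (1 <= n)%N -> 1 <= y ->
  measurable [set t | Y n x t <= y] /\
  P [set t | Y n x t <= y] = (expR (- rate (alpha x) y))%:E.
Proof.
move=> n1 y1; have y0 : 0 < y by apply: lt_le_trans y1.
rewrite Yfield_le_below //; split; first exact: below_measurable (proj1 W_indep).
rewrite below_frechet_prob ?Y_bounds_rate ?Y_bounds_pos // Y_bounds_indices.
by case: n n1 => // n _; simpl_index_uniq; lia.
Qed.

Lemma tail_dep_Yfield n m x x' (J : R -> seq (field_index R * R)) (S : R -> R) (L : R) :
  (1 <= n)%N -> (1 <= m)%N ->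
  (\forall y \near +oo,
     [/\ below W (Y_bounds alpha n x y) `&` below W (Y_bounds alpha m x' y) = below W (J y),
         uniq (map fst (J y)), all (fun p => 0 < p.2) (J y),
         rate (alpha x) y + rate (alpha x') y - \sum_(p <- J y) p.2^-1 = S y
       & 0 <= S y]) ->
  (fun y => S y / rate (alpha x) y) @ +oo --> L ->
  tail_dep P (Y m x') (Y n x) L.
Proof.
move=> n1 m1 HJ SL.
apply: (@tail_dep_of_exponents _ _ _ P _ _ (rate (alpha x)) (rate (alpha x')) S) => //;
  [|exact: rate_cvg0|exact: rate_cvg0].
near=> y; have y1 : 1 <= y by near: y; apply: nbhs_pinfty_ge; exact: num_real.
have y0 : 0 < y by apply: lt_le_trans y1.
have /(_ _)[//|capJ uJ posJ SE S0] := near HJ y.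
have [mU pU] := Yfield_cdf n x y n1 y1.
have [mV pV] := Yfield_cdf m x' y m1 y1.
split => //; split => //; last exact: rate_gt0.
rewrite !Yfield_le_below // capJ below_frechet_prob // -SE.
by congr (EFin (expR _)); ring.
Unshelve. all: by end_near. Qed.

(* Variables built from disjoint sets of Frechet variables are independent, hence
   asymptotically independent (S = 0). *)
Lemma tail_dep_disjoint n m x x' : (1 <= n)%N -> (1 <= m)%N ->
  uniq (Y_indices n x ++ Y_indices m x') -> tail_dep P (Y m x') (Y n x) 0.
Proof.
move=> n1 m1 us.
apply: (tail_dep_Yfield n m x x' (fun y => Y_bounds alpha n x y ++ Y_bounds alpha m x' y)
  (fun=> 0)) => //; last first.
  by apply: (cvg_eventually_eq (cvg_cst 0)); near=> y; rewrite mul0r.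
near=> y; have y0 : 0 < y by near: y; exact: nbhs_pinfty_gt.
split.
- by rewrite below_cat.
- by rewrite map_cat !Y_bounds_indices.
- by rewrite all_cat !Y_bounds_pos.
- by rewrite big_cat /= !Y_bounds_rate // subrr.
- by [].
Unshelve. all: by end_near. Qed.

(* Consecutive times at one site share only Xh_n(x), bounded by 3y/2 in Y_n(x) and
   by 3y in Y_(n+1)(x), so S = 1/(3y) and lambda = (1/3) lim y^-1 / rate. *)
Lemma tail_dep_next_time n x : (1 <= n)%N ->
  tail_dep P (Y n.+1 x) (Y n x)
    (1/3 * (if alpha x < 1 then 0 else if alpha x == 1 then 1/2 else 1)).
Proof.
move=> n1; have a0 := alpha_gt0 x.
pose J y : seq (field_index R * R) :=
  [:: (inl (n, x), 3/2 * y); (inl (n.-1, x), 3 * y); (inr n.-1, y `^ alpha x);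
      (inl (n.+1, x), 3/2 * y); (inr n, y `^ alpha x)].
apply: (tail_dep_Yfield n n.+1 x x J (fun y => (3 * y)^-1)) => //; last first.
  apply: (cvg_eventually_eq (cvgMr (invy_rate_cvg a0))); near=> y.
  have y0 : 0 < y by near: y; exact: nbhs_pinfty_gt.
  have r0 : 0 < rate (alpha x) y := rate_gt0 y0.
  by field; rewrite !lt0r_neq0.
near=> y; have y0 : 0 < y by near: y; exact: nbhs_pinfty_gt.
have ya : 0 < y `^ alpha x by apply: powR_gt0.
split.
- rewrite /J /below /Y_bounds; case: n n1 {J} => // n _.
  rewrite !big_cons !big_nil; apply/seteqP; split => t /=; rewrite !in_itv /=.
    by move=> [[-> [-> [-> _]]] [-> [_ [-> _]]]].
  by move=> [b1 [b2 [b3 [b4 [b5 _]]]]]; do !split => //; lra.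
- by rewrite /J; case: n n1 {J} => // n _; simpl_index_uniq; lia.
- by rewrite /J /= ya !mulr_gt0 ?invr_gt0.
- by rewrite /J /= /rate !big_cons big_nil /=; field; rewrite !lt0r_neq0.
- by rewrite invr_ge0 mulr_ge0 // ltW.
Unshelve. all: by end_near. Qed.

(* At one time and two sites only Z_n is shared, bounded by y^alpha(x) and
   y^alpha(x'); so S = y^-max(alpha x, alpha x'), and lambda is the limit share of
   y^-alpha(x) in rate (alpha x) when alpha x' <= alpha x, and 0 otherwise. *)
Lemma tail_dep_same_time n x x' : (1 <= n)%N -> x != x' ->
  tail_dep P (Y n x') (Y n x)
    (if (alpha x' <= alpha x) && (alpha x < 1) then 1
     else if (alpha x' <= alpha x) && (alpha x == 1) then 1/2 else 0).
Proof.
move=> n1 xx'; have a0 := alpha_gt0 x; have a0' := alpha_gt0 x'.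
pose J y : seq (field_index R * R) :=
  [:: (inl (n, x), 3/2 * y); (inl (n.-1, x), 3 * y);
      (inr n.-1, Num.min (y `^ alpha x) (y `^ alpha x'));
      (inl (n, x'), 3/2 * y); (inl (n.-1, x'), 3 * y)].
apply: (tail_dep_Yfield n n x x' J (fun y => (y `^ Num.max (alpha x) (alpha x'))^-1))
  => //; first last.
  have [aa|aa] := leP (alpha x') (alpha x).
  - exact: invpow_rate_cvg.
  - exact: steeper_rate_cvg0.
near=> y; have y1 : 1 <= y by near: y; apply: nbhs_pinfty_ge; exact: num_real.
have y0 : 0 < y by apply: lt_le_trans y1.
have ya : 0 < y `^ alpha x by apply: powR_gt0.
have ya' : 0 < y `^ alpha x' by apply: powR_gt0.
split.
- rewrite /J /below /Y_bounds; case: n n1 {J} => // n _.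
  rewrite !big_cons !big_nil; apply/seteqP; split => t /=; rewrite !in_itv /= ?le_min.
    by move=> [[-> [-> [-> _]]] [-> [-> [-> _]]]].
  by move=> [-> [-> [/andP[-> ->] [-> [-> _]]]]].
- rewrite /J; case: n n1 {J} => // n _; simpl_index_uniq.
  by rewrite (negbTE xx') /=; lia.
- by rewrite /J /= lt_min ya ya' !mulr_gt0 ?invr_gt0.
- rewrite /J /= /rate !big_cons big_nil /=.
  have [aa|aa] := leP (alpha x') (alpha x).
  + rewrite min_r; last exact: ler_powR y1 _ _ aa.
    by field; rewrite !lt0r_neq0.
  + rewrite min_l; last exact: ler_powR y1 _ _ (ltW aa).
    by field; rewrite !lt0r_neq0.
- by rewrite invr_ge0 powR_ge0.
Unshelve. all: by end_near. Qed.

End TailDependenceOfY.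

Theorem mainTheorem3 (d : measure_display) (T : measurableType d) (R : realType)
  (P : probability T R)
  (Xh : nat -> R * R -> T -> R) (Z : nat -> T -> R) (alpha : R * R -> R) :
  (* all Xh_n(x) (n >= 0, x in R^2) and Z_m (m >= 1) are mutually independent *)
  mutually_independent P
    (fun i : (nat * (R * R)) + nat =>
       match i with inl nx => Xh nx.1 nx.2 | inr m => Z m.+1 end) ->
  (forall n x, std_frechet P (Xh n x)) ->
  (forall m, (1 <= m)%N -> std_frechet P (Z m)) ->
  (forall x, 0 < alpha x) ->
  (forall (n r : nat) (x : R * R), (1 <= n)%N -> (1 <= r)%N ->
     tail_dep P (Yfield Xh Z alpha (n + r) x) (Yfield Xh Z alpha n x)
       (if (alpha x < 1) || (1 < r)%N then 0
        else if alpha x == 1 then 1/6 else 1/3)) /\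
  (forall (n r : nat) (x x' : R * R), (1 <= n)%N -> (1 <= r)%N -> x != x' ->
     tail_dep P (Yfield Xh Z alpha (n + r) x') (Yfield Xh Z alpha n x) 0) /\
  (forall (n : nat) (x x' : R * R), (1 <= n)%N -> x != x' ->
     tail_dep P (Yfield Xh Z alpha n x') (Yfield Xh Z alpha n x)
       (if (alpha x' <= alpha x) && (alpha x < 1) then 1
        else if (alpha x' <= alpha x) && (alpha x == 1) then 1/2 else 0)).
Proof.
move=> indep frechetX frechetZ alpha_gt0.
have W_indep : mutually_independent P (field_family Xh Z) by exact: indep.
have W_frechet : forall i, std_frechet P (field_family Xh Z i).
  by case=> [[n x]|m]; [exact: frechetX | exact: frechetZ].
split; [|split].
- move=> n r x n1 r1; have [->|r_neq1] := eqVneq r 1%N.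
  + rewrite addn1 orbF.
    have -> : (if alpha x < 1 then 0 else if alpha x == 1 then 1/6 else 1/3) =
        1/3 * (if alpha x < 1 then 0 else if alpha x == 1 then 1/2 else 1) :> R.
      by case: ifP => _; [rewrite mulr0 | case: ifP => _; field].
    exact: tail_dep_next_time.
  + have r_gt1 : (1 < r)%N by lia.
    rewrite r_gt1 orbT; apply: tail_dep_disjoint => //; first lia.
    by case: n n1 => // n _; rewrite addSn; simpl_index_uniq; lia.
- move=> n r x x' n1 r1 xx'; apply: tail_dep_disjoint => //; first lia.
  case: n n1 => // n _; rewrite addSn; simpl_index_uniq.
  by rewrite (negbTE xx') /=; lia.
- by move=> n x x' n1 xx'; exact: tail_dep_same_time.
Qed.
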